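(* Let $n,N\ge 1$ and $\varepsilon\ge 0$ be integers with $\varepsilon/n\le 1/2$ and $N<2^{n(1-h(\varepsilon/n))-1}$. Let $p=1-(1-V_\varepsilon)^N$ be the success probability of a single trial of the attacker, and let $m_{out}=-\ln 2/\ln(1-p)$ be the median number of trials for the attacker to successfully impersonate a user. Then $$m_{out}=\Omega\left(2^{n(1-h(\varepsilon/n))-\log_2 N}\right)\quad\text{and}\quad m_{out}=O\left(2^{n(1-h(\varepsilon/n))+\frac{1}{2}\log_2\left(\varepsilon\left(1-\frac{\varepsilon}{n}\right)\right)-\log_2 N}\right),$$ where $h$ is the binary entropy function.
   Context: Templates are binary vectors in $\mathbb{Z}_2^n$ compared with the Hamming distance $d_{\mathcal H}$; a guess $t$ is accepted against an enrolled template $v$ if $d_{\mathcal H}(t,v)\le\varepsilon$. The $N$ enrolled templates are independent and uniformly distributed in $\mathbb{Z}_2^n$, and the (outsider) attacker generates independent uniformly random templates until one is within distance $\varepsilon$ of some enrolled template. $B_\varepsilon(t)=\{y\in\mathbb{Z}_2^n: d_{\mathcal H}(t,y)\le\varepsilon\}$, $|B_\varepsilon|=\sum_{k=0}^{\varepsilon}\binom{n}{k}$, and $V_\varepsilon=|B_\varepsilon|/2^n$. The binary entropy function is $h(x)=-x\log_2 x-(1-x)\log_2(1-x)$. *)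

From Stdlib Require Import Reals.
Open Scope R_scope.

Definition log2 (x : R) : R := ln x / ln 2.

(* binary entropy h(x) = -x log2 x - (1-x) log2 (1-x); at x = 0 or 1 the
   terms 0*log2 0 evaluate to 0 (since Stdlib's ln 0 = 0), matching the
   usual convention 0 log 0 = 0. *)
Definition h (x : R) : R := - x * log2 x - (1 - x) * log2 (1 - x).

Definition ball_card (n e : nat) : R := sum_f_R0 (fun k => Binomial.C n k) e.

Definition V (n e : nat) : R := ball_card n e / 2 ^ n.

Definition p_succ (n N e : nat) : R := 1 - (1 - V n e) ^ N.

Definition m_out (n N e : nat) : R := - ln 2 / ln (1 - p_succ n N e).

Definition expo (n e : nat) : R := INR n * (1 - h (INR e / INR n)).

(** Write x = e/n and K = 2^(n(1-h(x))) = 2^n x^e (1-x)^(n-e).  Since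
    x <= 1/2, every term C(n,i) x^e (1-x)^(n-e) of |B_e| x^e (1-x)^(n-e)
    is dominated by the binomial term C(n,i) x^i (1-x)^(n-i), so V K <= 1;
    and a Stirling-type estimate of C(n,e) gives V K sqrt(e(1-x)) >= exp(-9/8).
    The hypothesis on N forces V < 1/2, so L = -ln(1-V) lies between V and
    2V, and m_out = ln 2 / (N L) is then squeezed between (ln 2 / 2) K / N
    and ln 2 exp(9/8) K sqrt(e(1-x)) / N. *)

From Coquelicot Require Import Coquelicot.
From Stdlib Require Import Reals Lra Lia Factorial.
Open Scope R_scope.

Lemma nonneg_of_derive_nonneg (f df : R -> R) (y : R) :
  f 0 = 0 -> (forall t, 0 <= t -> is_derive f t (df t)) ->
  (forall t, 0 <= t -> 0 <= df t) -> 0 <= y -> 0 <= f y.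
Proof.
  intros Hf0 Hd Hdf Hy.
  destruct (MVT_gen f 0 y df) as [c [Hc Heq]].
  - intros t Ht. apply Hd. rewrite Rmin_left in Ht by lra. lra.
  - intros t Ht. rewrite Rmin_left, Rmax_right in Ht by lra.
    apply derivable_continuous_pt. exists (df t). apply is_derive_Reals, Hd. lra.
  - rewrite Rmin_left, Rmax_right in Hc by lra.
    assert (0 <= df c * (y - 0)) by (apply Rmult_le_pos; [apply Hdf|]; lra).
    lra.
Qed.

Lemma ln_1p_ge (y : R) : 0 <= y -> 2 * y / (2 + y) <= ln (1 + y).
Proof.
  intros Hy.
  enough (0 <= ln (1 + y) - 2 * y / (2 + y)) by lra.
  apply (nonneg_of_derive_nonneg (fun t => ln (1 + t) - 2 * t / (2 + t))
           (fun t => t ^ 2 / ((1 + t) * (2 + t) ^ 2))); [| | |exact Hy].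
  - rewrite !Rplus_0_r, ln_1. field.
  - intros t Ht. auto_derive; [repeat split; lra|field; lra].
  - intros t Ht. apply Rmult_le_pos; [nra|].
    apply Rlt_le, Rinv_0_lt_compat, Rmult_lt_0_compat; nra.
Qed.

Lemma ln_1p_le (y : R) : 0 <= y -> ln (1 + y) <= y * (6 + y) / (6 + 4 * y).
Proof.
  intros Hy.
  enough (0 <= y * (6 + y) / (6 + 4 * y) - ln (1 + y)) by lra.
  apply (nonneg_of_derive_nonneg (fun t => t * (6 + t) / (6 + 4 * t) - ln (1 + t))
           (fun t => 4 * t ^ 3 / ((1 + t) * (6 + 4 * t) ^ 2))); [| | |exact Hy].
  - rewrite !Rplus_0_r, ln_1. field.
  - intros t Ht. auto_derive; [repeat split; lra|field; lra].
  - intros t Ht. apply Rmult_le_pos; [nra|].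
    apply Rlt_le, Rinv_0_lt_compat, Rmult_lt_0_compat; nra.
Qed.

Lemma ln_le_sub_1 (x : R) : 0 < x -> ln x <= x - 1.
Proof.
  intros Hx. pose proof (exp_ineq1_le (ln x)) as H.
  rewrite exp_ln in H by exact Hx. lra.
Qed.

Lemma ln_1p_inv_ge (j : nat) : (1 <= j)%nat -> 1 <= (INR j + / 2) * ln (1 + / INR j).
Proof.
  intros Hj. assert (Hj1 : 1 <= INR j) by (apply (le_INR 1); lia).
  assert (Hy : 0 <= / INR j) by (apply Rlt_le, Rinv_0_lt_compat; lra).
  apply Rle_trans with ((INR j + / 2) * (2 * / INR j / (2 + / INR j))).
  - right. field. lra.
  - apply Rmult_le_compat_l; [lra|]. exact (ln_1p_ge _ Hy).
Qed.

(** The bound telescopes: its right-hand side is [1 + g j - g (j + 1)] with [g j = 1 / (8 j)]. *)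
Lemma ln_1p_inv_le (j : nat) : (1 <= j)%nat ->
  (INR j + / 2) * ln (1 + / INR j) <= 1 + / (8 * INR j) - / (8 * INR (S j)).
Proof.
  intros Hj. assert (Hj1 : 1 <= INR j) by (apply (le_INR 1); lia).
  assert (Hy : 0 <= / INR j) by (apply Rlt_le, Rinv_0_lt_compat; lra).
  apply Rle_trans with ((INR j + / 2) * (/ INR j * (6 + / INR j) / (6 + 4 * / INR j))).
  { apply Rmult_le_compat_l; [lra|]. exact (ln_1p_le _ Hy). }
  rewrite S_INR.
  replace ((INR j + / 2) * (/ INR j * (6 + / INR j) / (6 + 4 * / INR j)))
    with (1 + / (12 * INR j * INR j + 8 * INR j)) by (field; split; nra).
  replace (1 + / (8 * INR j) - / (8 * (INR j + 1)))
    with (1 + / (8 * INR j * INR j + 8 * INR j)) by (field; split; nra).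
  apply Rplus_le_compat_l, Rinv_le_contravar; nra.
Qed.

(** [ln (j! / (sqrt j (j/e)^j))], which tends to [ln (sqrt (2 pi))] by Stirling's formula. *)
Definition stirling_log_ratio (j : nat) : R :=
  ln (INR (fact j)) + INR j - INR j * ln (INR j) - / 2 * ln (INR j).

Lemma stirling_log_ratio_1 : stirling_log_ratio 1 = 1.
Proof. unfold stirling_log_ratio. simpl. rewrite ln_1. ring. Qed.

Lemma stirling_log_ratio_succ (j : nat) : (1 <= j)%nat ->
  stirling_log_ratio (S j) = stirling_log_ratio j + 1 - (INR j + / 2) * ln (1 + / INR j).
Proof.
  intros Hj.
  assert (Hj0 : 0 < INR j) by (apply lt_0_INR; lia).
  assert (Hlog : ln (1 + / INR j) = ln (INR (S j)) - ln (INR j)).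
  { rewrite <- ln_div by (try apply lt_0_INR; lia).
    f_equal. rewrite S_INR. field. lra. }
  unfold stirling_log_ratio. rewrite Hlog, fact_simpl, mult_INR, ln_mult
    by first [apply INR_fact_lt_0 | apply lt_0_INR; lia].
  rewrite S_INR. ring.
Qed.

Lemma stirling_log_ratio_le (j : nat) : (1 <= j)%nat -> stirling_log_ratio j <= 1.
Proof.
  induction j as [|j IH]; intros Hj; [lia|].
  destruct (Nat.eq_dec j 0) as [->|Hj0]; [rewrite stirling_log_ratio_1; lra|].
  rewrite stirling_log_ratio_succ by lia.
  pose proof (ln_1p_inv_ge j ltac:(lia)). specialize (IH ltac:(lia)). lra.
Qed.

Lemma stirling_log_ratio_ge (j : nat) : (1 <= j)%nat ->
  7 / 8 + / (8 * INR j) <= stirling_log_ratio j.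
Proof.
  induction j as [|j IH]; intros Hj; [lia|].
  destruct (Nat.eq_dec j 0) as [->|Hj0]; [rewrite stirling_log_ratio_1; simpl; lra|].
  rewrite stirling_log_ratio_succ by lia.
  pose proof (ln_1p_inv_le j ltac:(lia)). specialize (IH ltac:(lia)). lra.
Qed.

Lemma ln_sqrt (x : R) : 0 < x -> ln (sqrt x) = / 2 * ln x.
Proof. intros Hx. rewrite <- Rpower_sqrt by exact Hx. apply ln_Rpower. Qed.

Lemma exp_le_of_le_ln (x y : R) : 0 < y -> x <= ln y -> exp x <= y.
Proof.
  intros Hy Hle. rewrite <- (exp_ln y Hy).
  destruct Hle as [Hlt|Heq]; [left; apply exp_increasing, Hlt|right; rewrite Heq; reflexivity].
Qed.

Ltac pos_factors :=
  repeat first [ apply Rmult_lt_0_compat | apply Rdiv_lt_0_compat | apply pow_lt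
               | apply sqrt_lt_R0 | apply Rinv_0_lt_compat | apply INR_fact_lt_0
               | assumption ].

Lemma binom_pow_sqrt_ge (k m : nat) : (1 <= k)%nat -> (1 <= m)%nat ->
  exp (- (9 / 8)) <=
  Binomial.C (k + m) k * (INR k / INR (k + m)) ^ k * (INR m / INR (k + m)) ^ m
  * sqrt (INR k * INR m / INR (k + m)).
Proof.
  intros Hk Hm.
  assert (Hk0 : 0 < INR k) by (apply lt_0_INR; lia).
  assert (Hm0 : 0 < INR m) by (apply lt_0_INR; lia).
  assert (Hkm0 : 0 < INR (k + m)) by (apply lt_0_INR; lia).
  assert (HC : Binomial.C (k + m) k = INR (fact (k + m)) / (INR (fact k) * INR (fact m))).
  { unfold Binomial.C. replace (k + m - k)%nat with m by lia. reflexivity. }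
  rewrite HC. apply exp_le_of_le_ln; [pos_factors|].
  apply Rle_trans with
    (stirling_log_ratio (k + m) - stirling_log_ratio k - stirling_log_ratio m).
  - pose proof (stirling_log_ratio_ge (k + m) ltac:(lia)).
    assert (0 < / (8 * INR (k + m))) by (apply Rinv_0_lt_compat; lra).
    pose proof (stirling_log_ratio_le k Hk). pose proof (stirling_log_ratio_le m Hm).
    lra.
  - right. rewrite !ln_mult, ln_sqrt, !ln_pow, !ln_div, !ln_mult by pos_factors.
    unfold stirling_log_ratio. rewrite plus_INR. ring.
Qed.

Lemma binom_pos (n i : nat) : 0 < Binomial.C n i.
Proof. unfold Binomial.C. pos_factors. Qed.

Lemma partial_sum_le (f : nat -> R) (e n : nat) :
  (forall i, 0 <= f i) -> (e <= n)%nat -> sum_f_R0 f e <= sum_f_R0 f n.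
Proof.
  intros Hf. induction n as [|n IH]; intros Hen.
  - replace e with 0%nat by lia. lra.
  - destruct (Nat.eq_dec e (S n)) as [->|Hne]; [lra|].
    simpl. specialize (IH ltac:(lia)). specialize (Hf (S n)). lra.
Qed.

Lemma binom_le_ball_card (n e : nat) : Binomial.C n e <= ball_card n e.
Proof.
  unfold ball_card. destruct e as [|e]; simpl; [lra|].
  enough (0 <= sum_f_R0 (fun k => Binomial.C n k) e) by lra.
  apply cond_pos_sum. intros i. apply Rlt_le, binom_pos.
Qed.

(** Compare with the binomial expansion of [(x + (1 - x))^n = 1]: for [i <= e]
    we have [x^e (1-x)^(n-e) <= x^i (1-x)^(n-i)] because [x <= 1 - x]. *)
Lemma ball_card_mul_pow_le (n e : nat) (x : R) :
  (e <= n)%nat -> 0 <= x -> x <= 1 - x ->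
  ball_card n e * (x ^ e * (1 - x) ^ (n - e)) <= 1.
Proof.
  intros Hen Hx Hx2.
  set (term i := Binomial.C n i * x ^ i * (1 - x) ^ (n - i)).
  assert (Hterm : forall i, 0 <= term i).
  { intros i. unfold term. pose proof (binom_pos n i).
    apply Rmult_le_pos; [apply Rmult_le_pos; [lra|]|]; apply pow_le; lra. }
  assert (Hsum : sum_f_R0 term n = 1).
  { unfold term. rewrite <- binomial. replace (x + (1 - x)) with 1 by ring. apply pow1. }
  apply Rle_trans with (sum_f_R0 term n); [|right; exact Hsum].
  unfold ball_card. rewrite Rmult_comm, scal_sum.
  apply Rle_trans with (sum_f_R0 term e); [|apply partial_sum_le; assumption].
  apply sum_Rle. intros i Hi. unfold term.
  replace e with (i + (e - i))%nat at 1 by lia.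
  replace (n - i)%nat with ((e - i) + (n - e))%nat by lia.
  rewrite !pow_add.
  assert (Hshift : x ^ (e - i) <= (1 - x) ^ (e - i)) by (apply pow_incr; lra).
  pose proof (binom_pos n i).
  assert (0 <= x ^ i) by (apply pow_le; lra).
  assert (0 <= x ^ (e - i)) by (apply pow_le; lra).
  assert (0 <= (1 - x) ^ (n - e)) by (apply pow_le; lra).
  rewrite !Rmult_assoc. apply Rmult_le_compat_l; [lra|].
  apply Rmult_le_compat_l; [assumption|].
  apply Rmult_le_compat_r; assumption.
Qed.

Lemma ln_2_pos : 0 < ln 2.
Proof. rewrite <- ln_1. apply ln_increasing; lra. Qed.

Lemma Rpower_2_log2 (x : R) : 0 < x -> Rpower 2 (log2 x) = x.
Proof.
  intros Hx. unfold Rpower, log2. pose proof ln_2_pos.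
  replace (ln x / ln 2 * ln 2) with (ln x) by (field; lra). apply exp_ln, Hx.
Qed.

Lemma Rpower_2_mul_log2 (y x : R) : 0 < x -> Rpower 2 (y * log2 x) = Rpower x y.
Proof.
  intros Hx. rewrite Rmult_comm, <- Rpower_mult, Rpower_2_log2 by exact Hx. reflexivity.
Qed.

Lemma Rpower_2_sub_log2 (a x : R) : 0 < x -> Rpower 2 (a - log2 x) = Rpower 2 a / x.
Proof.
  intros Hx. unfold Rminus. rewrite Rpower_plus, Rpower_Ropp, Rpower_2_log2 by exact Hx.
  reflexivity.
Qed.

Lemma Rpower_2_add_half_log2 (a x : R) : 0 < x ->
  Rpower 2 (a + / 2 * log2 x) = Rpower 2 a * sqrt x.
Proof.
  intros Hx. rewrite Rpower_plus, Rpower_2_mul_log2, Rpower_sqrt by exact Hx.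
  reflexivity.
Qed.

Lemma Rpower_2_expo (n e : nat) : (e < n)%nat ->
  Rpower 2 (expo n e) =
  2 ^ n * ((INR e / INR n) ^ e * (1 - INR e / INR n) ^ (n - e)).
Proof.
  intros Hen.
  assert (Hn0 : 0 < INR n) by (apply lt_0_INR; lia).
  assert (Hlt : INR e < INR n) by (apply lt_INR, Hen).
  set (x := INR e / INR n).
  assert (Hx1 : 0 < 1 - x).
  { unfold x. apply Rlt_0_minus, Rlt_div_l; lra. }
  assert (Hexpo : expo n e = INR n + INR e * log2 x + INR (n - e) * log2 (1 - x)).
  { assert (He : INR e = INR n * x) by (unfold x; field; lra).
    unfold expo, h. fold x. rewrite minus_INR, He by lia. ring. }
  rewrite Hexpo, !Rpower_plus, (Rpower_2_mul_log2 _ (1 - x)), !Rpower_pow by lra.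
  destruct e as [|e].
  - simpl. replace (0 * log2 x) with 0 by ring. rewrite Rpower_O by lra. ring.
  - rewrite Rpower_2_mul_log2, Rpower_pow.
    + ring.
    + apply Rdiv_lt_0_compat; [apply lt_0_INR; lia|exact Hn0].
    + apply Rdiv_lt_0_compat; [apply lt_0_INR; lia|exact Hn0].
Qed.

Lemma V_pos (n e : nat) : 0 < V n e.
Proof.
  unfold V. pose proof (binom_le_ball_card n e). pose proof (binom_pos n e).
  apply Rdiv_lt_0_compat; [lra|apply pow_lt; lra].
Qed.

Lemma lt_of_ratio_le_half (n e : nat) : (1 <= n)%nat -> INR e / INR n <= 1 / 2 -> (e < n)%nat.
Proof.
  intros Hn Hx. assert (Hn0 : 0 < INR n) by (apply lt_0_INR; lia).
  apply INR_lt. apply Rmult_le_compat_r with (r := INR n) in Hx; [|lra].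
  unfold Rdiv in Hx. rewrite Rmult_assoc, Rinv_l in Hx by lra. lra.
Qed.

Lemma V_mul_Rpower_2_expo (n e : nat) : (e < n)%nat ->
  V n e * Rpower 2 (expo n e) =
  ball_card n e * ((INR e / INR n) ^ e * (1 - INR e / INR n) ^ (n - e)).
Proof.
  intros Hen. rewrite Rpower_2_expo by exact Hen. unfold V.
  field. apply pow_nonzero. lra.
Qed.

Lemma V_mul_Rpower_2_expo_le (n e : nat) : (1 <= n)%nat -> INR e / INR n <= 1 / 2 ->
  V n e * Rpower 2 (expo n e) <= 1.
Proof.
  intros Hn Hx. pose proof (lt_of_ratio_le_half n e Hn Hx) as Hen.
  assert (0 <= INR e / INR n) by (apply Rdiv_le_0_compat; [apply pos_INR|apply lt_0_INR; lia]).
  rewrite V_mul_Rpower_2_expo by exact Hen.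
  apply ball_card_mul_pow_le; lia || lra.
Qed.

Lemma V_mul_Rpower_2_expo_ge (n e : nat) :
  (1 <= n)%nat -> (1 <= e)%nat -> INR e / INR n <= 1 / 2 ->
  exp (- (9 / 8)) <= V n e * Rpower 2 (expo n e) * sqrt (INR e * (1 - INR e / INR n)).
Proof.
  intros Hn He Hx. pose proof (lt_of_ratio_le_half n e Hn Hx) as Hen.
  assert (Hn0 : 0 < INR n) by (apply lt_0_INR; lia).
  pose proof (binom_pow_sqrt_ge e (n - e) He ltac:(lia)) as Hbinom.
  replace (e + (n - e))%nat with n in Hbinom by lia.
  rewrite minus_INR in Hbinom by lia.
  replace ((INR n - INR e) / INR n) with (1 - INR e / INR n) in Hbinom by (field; lra).
  replace (INR e * (INR n - INR e) / INR n) with (INR e * (1 - INR e / INR n))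
    in Hbinom by (field; lra).
  rewrite V_mul_Rpower_2_expo by exact Hen.
  eapply Rle_trans; [exact Hbinom|].
  rewrite !Rmult_assoc. apply Rmult_le_compat_r.
  - assert (0 <= INR e / INR n) by (apply Rdiv_le_0_compat; [apply pos_INR|lra]).
    apply Rmult_le_pos; [|apply Rmult_le_pos; [|apply sqrt_pos]]; apply pow_le; lra.
  - apply binom_le_ball_card.
Qed.

Lemma neg_ln_1m_bounds (v : R) : v < 1 -> v <= - ln (1 - v) <= v / (1 - v).
Proof.
  intros Hv. split.
  - pose proof (ln_le_sub_1 (1 - v) ltac:(lra)). lra.
  - rewrite <- ln_Rinv by lra.
    replace (v / (1 - v)) with (/ (1 - v) - 1) by (field; lra).
    apply ln_le_sub_1, Rinv_0_lt_compat. lra.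
Qed.

Lemma m_out_eq (n N e : nat) : V n e < 1 ->
  m_out n N e = ln 2 / (INR N * - ln (1 - V n e)).
Proof.
  intros Hv. unfold m_out, p_succ.
  replace (1 - (1 - (1 - V n e) ^ N)) with ((1 - V n e) ^ N) by ring.
  rewrite ln_pow by lra. unfold Rdiv. rewrite <- Ropp_mult_distr_r, Rinv_opp. ring.
Qed.

Section MedianTrials.

Variables (n N e : nat) (K : R).
Hypotheses (HVK : V n e * K <= 1) (HN : (1 <= N)%nat) (HNK : INR N < K / 2).

Lemma V_lt_half : V n e < 1 / 2.
Proof.
  pose proof (V_pos n e). assert (1 <= INR N) by (apply (le_INR 1); exact HN).
  assert (INR N * V n e < K / 2 * V n e) by (apply Rmult_lt_compat_r; assumption).
  nra.
Qed.

Lemma m_out_ge : ln 2 / 2 * (K / INR N) <= m_out n N e.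
Proof.
  pose proof (V_pos n e) as Hv0. pose proof V_lt_half as Hv.
  pose proof (neg_ln_1m_bounds (V n e) ltac:(lra)) as [HLlo HLhi].
  set (L := - ln (1 - V n e)) in *.
  assert (HN0 : 0 < INR N) by (apply lt_0_INR; lia).
  assert (HK : 0 < K) by lra.
  assert (HKL : K * L <= 2).
  { apply Rle_trans with (K * (V n e / (1 - V n e))); [apply Rmult_le_compat_l; lra|].
    replace (K * (V n e / (1 - V n e))) with (V n e * K / (1 - V n e)) by (field; lra).
    apply Rle_div_l; lra. }
  rewrite m_out_eq by lra. fold L. pose proof ln_2_pos.
  apply (Rmult_le_reg_r (INR N * L)); [nra|].
  replace (ln 2 / (INR N * L) * (INR N * L)) with (ln 2) by (field; lra).
  replace (ln 2 / 2 * (K / INR N) * (INR N * L)) with (ln 2 / 2 * (K * L)) by (field; lra).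
  nra.
Qed.

Lemma m_out_le (s : R) : exp (- (9 / 8)) <= V n e * K * s ->
  m_out n N e <= ln 2 * exp (9 / 8) * (K * s / INR N).
Proof.
  intros Hs.
  pose proof (V_pos n e) as Hv0. pose proof V_lt_half as Hv.
  pose proof (neg_ln_1m_bounds (V n e) ltac:(lra)) as [HLlo HLhi].
  set (L := - ln (1 - V n e)) in *.
  assert (HN0 : 0 < INR N) by (apply lt_0_INR; lia).
  assert (HKs : 0 < K * s).
  { pose proof (exp_pos (- (9 / 8))). nra. }
  assert (Hexp : exp (9 / 8) * exp (- (9 / 8)) = 1)
    by (rewrite <- exp_plus, Rplus_opp_r; apply exp_0).
  rewrite m_out_eq by lra. fold L. pose proof ln_2_pos. pose proof (exp_pos (9 / 8)).
  apply (Rmult_le_reg_r (INR N * L)); [nra|].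
  replace (ln 2 / (INR N * L) * (INR N * L)) with (ln 2) by (field; lra).
  replace (ln 2 * exp (9 / 8) * (K * s / INR N) * (INR N * L))
    with (ln 2 * (exp (9 / 8) * (K * s * L))) by (field; lra).
  assert (exp (- (9 / 8)) <= K * s * L) by nra.
  assert (1 <= exp (9 / 8) * (K * s * L)) by (rewrite <- Hexp; apply Rmult_le_compat_l; lra).
  rewrite <- (Rmult_1_r (ln 2)) at 1. apply Rmult_le_compat_l; lra.
Qed.

End MedianTrials.

Theorem theorem4p1 :
  exists c1 c2 : R, 0 < c1 /\ 0 < c2 /\
  forall n N e : nat,
    (1 <= n)%nat -> (1 <= N)%nat ->
    INR e / INR n <= 1 / 2 ->
    INR N < Rpower 2 (expo n e - 1) ->
    c1 * Rpower 2 (expo n e - log2 (INR N)) <= m_out n N e /\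
    ((1 <= e)%nat ->
     m_out n N e <=
       c2 * Rpower 2 (expo n e
                      + / 2 * log2 (INR e * (1 - INR e / INR n))
                      - log2 (INR N))).
Proof.
  exists (ln 2 / 2), (ln 2 * exp (9 / 8)).
  pose proof ln_2_pos. pose proof (exp_pos (9 / 8)).
  split; [lra|]. split; [nra|].
  intros n N e Hn HN Hx HNK.
  assert (HN0 : 0 < INR N) by (apply lt_0_INR; lia).
  pose proof (V_mul_Rpower_2_expo_le n e Hn Hx) as HVK.
  replace 1 with (log2 2) in HNK by (unfold log2; field; lra).
  rewrite Rpower_2_sub_log2 in HNK by lra.
  split.
  - rewrite Rpower_2_sub_log2 by exact HN0.
    exact (m_out_ge n N e _ HVK HN HNK).
  - intros He.
    assert (HS : 0 < INR e * (1 - INR e / INR n)).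
    { apply Rmult_lt_0_compat; [apply lt_0_INR; lia|lra]. }
    rewrite Rpower_2_sub_log2, Rpower_2_add_half_log2 by assumption.
    apply (m_out_le n N e _ HVK HN HNK).
    exact (V_mul_Rpower_2_expo_ge n e Hn He Hx).
Qed.
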